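(* If a square matrix $A$ has a principal submatrix $A[\kappa]$ that is a Hurwitz-unstable $P^-_{FF}$ matrix, then $A$ is $D$-Hopf.
   Context: Hurwitz-unstable: at least one eigenvalue with positive real part. $P^-_0$ matrix: every nonzero $k\times k$ principal minor has sign $(-1)^k$. An $n\times n$ $P^-_0$ matrix $A$ is a $P^-_{FF}$ (Fisher–Fuller) matrix if there is a nested sequence of invertible principal submatrices $A[\kappa_1],\dots,A[\kappa_n]$ with $|\kappa_i|=i$ and $\kappa_{i-1}\subset\kappa_i$. Inertia: numbers of eigenvalues with negative, positive, zero real part. $A$ is $D$-Hopf if there exist an invertible $k\times k$ principal submatrix $A[\kappa]$ and positive diagonal $D_1,D_2$ with $\operatorname{inertia}(A[\kappa]D_1)\ne\operatorname{inertia}(A[\kappa]D_2)$. *)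

From HB Require Import structures.
From mathcomp Require Import all_boot all_order all_algebra.
From mathcomp.real_closed Require Import complex.
Set Implicit Arguments. Unset Strict Implicit. Unset Printing Implicit Defensive.
Import Order.TTheory GRing.Theory Num.Theory.
Local Open Scope ring_scope.

Section Defs.
Variable R : rcfType.


(* Principal submatrix A[kappa]: rows and columns indexed by kappa,
   in increasing order (enum of a set over 'I_n is increasing). *)
Definition psub m (A : 'M[R]_m) (kappa : {set 'I_m}) : 'M[R]_#|kappa| :=
  \matrix_(i, j) A (enum_val i) (enum_val j).

Definition cmx m (A : 'M[R]_m) : 'M[R[i]]_m := map_mx (fun x => (x%:C)%C) A.

Definition hurwitz_unstable m (A : 'M[R]_m) : Prop :=
  exists z : R[i], eigenvalue (cmx A) z /\ 0 < complex.Re z.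

Definition P0minus m (A : 'M[R]_m) : Prop :=
  forall K : {set 'I_m}, \det (psub A K) != 0 ->
    Num.sg (\det (psub A K)) = (-1) ^+ #|K|.

Definition PFFminus m (A : 'M[R]_m) : Prop :=
  P0minus A /\
  exists kap : nat -> {set 'I_m},
    (forall k, (1 <= k <= m)%N -> #|kap k| = k /\ \det (psub A (kap k)) != 0) /\
    (forall k, (2 <= k <= m)%N -> kap k.-1 \subset kap k).

(* Eigenvalues (with algebraic multiplicity) of a complex matrix. *)
Definition eigseq m (M : 'M[R[i]]_m) : seq R[i] :=
  sval (closed_field_poly_normal (char_poly M)).

Definition inertia m (A : 'M[R]_m) : nat * nat * nat :=
  let s := eigseq (cmx A) in
  (count (fun z => complex.Re z < 0) s,
   count (fun z => 0 < complex.Re z) s,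
   count (fun z => complex.Re z == 0) s).

Definition DHopf n (A : 'M[R]_n) : Prop :=
  exists kappa : {set 'I_n},
    \det (psub A kappa) != 0 /\
    exists d1 d2 : 'rV[R]_#|kappa|,
      (forall i, 0 < d1 0 i) /\ (forall i, 0 < d2 0 i) /\
      inertia (psub A kappa *m diag_mx d1) <> inertia (psub A kappa *m diag_mx d2).
End Defs.

(* Fisher-Fuller argument.  Write B = A[kappa].  Along the nested chain of
   invertible principal submatrices of B the determinants alternate in sign,
   so each time a coordinate j is added to the current index set S the Schur
   complement B_jj - B_jS B_S^-1 B_Sj is negative.  This allows one to extend,
   one coordinate at a time, a positive diagonal d together with a quadratic
   Lyapunov function V(y) = sum_k <L_k, y>^2 for B diag(d): the new coordinate
   gets a small weight, the old ones are sheared along B_S^-1 B_Sj, and V gains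
   one square.  A Lyapunov function forces every eigenvalue of B diag(d) into
   the open left half plane (test it on the real and imaginary parts of an
   eigenvector), whereas B = B I has an eigenvalue with positive real part;
   so the inertias of B diag(d) and B I differ, and A is D-Hopf. *)

From HB Require Import structures.
From mathcomp Require Import all_boot all_order all_algebra.
From mathcomp.real_closed Require Import complex.
From mathcomp Require Import ring lra.
From mathcomp Require Import fingroup perm.
Import Order.TTheory GRing.Theory Num.Theory.
Local Open Scope ring_scope.

Set Implicit Arguments. Unset Strict Implicit. Unset Printing Implicit Defensive.

Section RestrictedForms.
Variables (R : rcfType) (m : nat).
Implicit Types (S : {set 'I_m}) (u v x y : 'I_m -> R) (L : nat -> 'I_m -> R).

Definition dot_on S u y := \sum_(i in S) u i * y i.

Definition sqnorm_on S y := \sum_(i in S) y i ^+ 2.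

Definition bform_on S r L x y := \sum_(k < r) dot_on S (L k) x * dot_on S (L k) y.

Lemma eq_dot_on S u v x y :
  {in S, u =1 v} -> {in S, x =1 y} -> dot_on S u x = dot_on S v y.
Proof. by move=> uv xy; apply: eq_bigr => i iS; rewrite uv ?xy. Qed.

Lemma dot_onDr S u x y :
  dot_on S u (fun i => x i + y i) = dot_on S u x + dot_on S u y.
Proof. by rewrite /dot_on -big_split; apply: eq_bigr => i _; rewrite mulrDr. Qed.

Lemma dot_onZr S u (a : R) y : dot_on S u (fun i => a * y i) = a * dot_on S u y.
Proof. by rewrite /dot_on mulr_sumr; apply: eq_bigr => i _; rewrite mulrCA. Qed.

Lemma dot_on_setU1 S j u y :
  j \notin S -> dot_on (j |: S) u y = u j * y j + dot_on S u y.
Proof. exact: big_setU1. Qed.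

Lemma sqnorm_on_setU1 S j y :
  j \notin S -> sqnorm_on (j |: S) y = y j ^+ 2 + sqnorm_on S y.
Proof. exact: big_setU1. Qed.

Lemma sqnorm_on_ge0 S y : 0 <= sqnorm_on S y.
Proof. by apply: sumr_ge0 => i _; apply: sqr_ge0. Qed.

Lemma eq_bform_on S r L x y y' :
  {in S, y =1 y'} -> bform_on S r L x y = bform_on S r L x y'.
Proof.
by move=> yy'; apply: eq_bigr => k _; rewrite (@eq_dot_on S (L k) (L k) y y').
Qed.

Lemma bform_onC S r L x y : bform_on S r L x y = bform_on S r L y x.
Proof. by apply: eq_bigr => k _; rewrite mulrC. Qed.

Lemma bform_onDr S r L x y w :
  bform_on S r L x (fun i => y i + w i) = bform_on S r L x y + bform_on S r L x w.
Proof.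
by rewrite /bform_on -big_split; apply: eq_bigr => k _; rewrite dot_onDr mulrDr.
Qed.

Lemma bform_onZr S r L x (a : R) y :
  bform_on S r L x (fun i => a * y i) = a * bform_on S r L x y.
Proof.
by rewrite /bform_on mulr_sumr; apply: eq_bigr => k _; rewrite dot_onZr mulrCA.
Qed.

Lemma bform_on_dotr S r L x y :
  bform_on S r L x y = dot_on S (fun i => \sum_(k < r) L k i * dot_on S (L k) y) x.
Proof.
rewrite /bform_on /dot_on; under [RHS]eq_bigr do rewrite mulr_suml.
rewrite exchange_big /=; apply: eq_bigr => k _; rewrite mulr_suml.
by apply: eq_bigr => i _; rewrite mulrAC.
Qed.

Lemma sqr_sum_le_card S (a : 'I_m -> R) :
  (\sum_(i in S) a i) ^+ 2 <= #|S|%:R * \sum_(i in S) a i ^+ 2.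
Proof.
have amgm i j : a i * a j <= (a i ^+ 2 + a j ^+ 2) / 2.
  by have := sqr_ge0 (a i - a j); lra.
rewrite expr2 mulr_suml.
apply: (@le_trans _ _ (\sum_(i in S) \sum_(j in S) (a i ^+ 2 + a j ^+ 2) / 2)).
  by apply: ler_sum => i _; rewrite mulr_sumr; apply: ler_sum => j _.
rewrite (eq_bigr (fun i => (#|S|%:R * a i ^+ 2 + \sum_(j in S) a j ^+ 2) / 2)).
  rewrite -mulr_suml big_split /= -mulr_sumr sumr_const -mulr_natl.
  set Q := \sum_(i in S) _; lra.
by move=> i _; rewrite -mulr_suml big_split /= sumr_const mulr_natl.
Qed.

Lemma dot_on_sqr_bounded S u :
  exists2 C, 0 <= C & forall y, dot_on S u y ^+ 2 <= C * sqnorm_on S y.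
Proof.
exists (#|S|%:R * sqnorm_on S u); first exact: mulr_ge0 (sqnorm_on_ge0 _ _).
move=> y; apply: le_trans (sqr_sum_le_card _ _) _.
rewrite -mulrA ler_wpM2l // mulr_sumr; apply: ler_sum => i iS.
rewrite exprMn ler_wpM2r ?sqr_ge0 // /sqnorm_on (bigD1 i) //= lerDl.
by apply: sumr_ge0 => l _; apply: sqr_ge0.
Qed.

Definition shear j (c : R) h y : 'I_m -> R := fun i => y i + c * y j * h i.

Lemma sqnorm_on_shear S j c h y :
  sqnorm_on S y <= 2 * sqnorm_on S (shear j c h y) + 2 * c ^+ 2 * y j ^+ 2 * sqnorm_on S h.
Proof.
rewrite /sqnorm_on !mulr_sumr -big_split /=; apply: ler_sum => i _.
have := sqr_ge0 (y i + 2 * (c * y j * h i)).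
have -> : 2 * c ^+ 2 * y j ^+ 2 * h i ^+ 2 = 2 * (c * y j * h i) ^+ 2 by ring.
rewrite /shear; nra.
Qed.

Definition extend_forms S j r L (c : R) h : nat -> 'I_m -> R := fun k =>
  if (k < r)%N then fun i => if i == j then c * dot_on S (L k) h else L k i
  else fun i => if i == j then c else 0.

Lemma bform_on_extend S j r L c h x y : j \notin S ->
  bform_on (j |: S) r.+1 (extend_forms S j r L c h) x y =
  bform_on S r L (shear j c h x) (shear j c h y) + c * x j * (c * y j).
Proof.
move=> jS; have neq_j i : i \in S -> (i == j) = false.
  by move=> iS; apply: contraNF jS => /eqP <-.
have dot_old (k : 'I_r) w :
    dot_on (j |: S) (extend_forms S j r L c h k) w = dot_on S (L k) (shear j c h w).
  rewrite dot_on_setU1 // /extend_forms ltn_ord eqxx /shear dot_onDr dot_onZr.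
  rewrite (@eq_dot_on S _ (L k) w w) => [|i iS|//]; last by rewrite neq_j.
  by rewrite mulrAC addrC.
have dot_new w : dot_on (j |: S) (extend_forms S j r L c h r) w = c * w j.
  rewrite dot_on_setU1 // /extend_forms ltnn eqxx.
  rewrite (@eq_dot_on S _ (fun=> 0) w w) => [|i iS|//]; last by rewrite neq_j.
  by rewrite /dot_on big1 ?addr0 // => i _; rewrite mul0r.
rewrite /bform_on big_ord_recr /= !dot_new; congr (_ + _).
by apply: eq_bigr => k _; rewrite !dot_old.
Qed.

End RestrictedForms.

Section StepArithmetic.
Variable R : rcfType.

Lemma mul_le_young (p x y : R) : 0 < p -> x * y <= (p * x ^+ 2 + y ^+ 2 / p) / 2.
Proof.
move=> p0; have : 0 <= (p * x - y) ^+ 2 / p by rewrite divr_ge0 ?sqr_ge0 ?ltW.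
have -> : (p * x - y) ^+ 2 / p = p * x ^+ 2 + y ^+ 2 / p - 2 * (x * y).
  by field; rewrite gt_eqF.
lra.
Qed.

Lemma step_norm_bound (al' dl H a t Nz : R) :
  0 <= al' -> Nz <= 2 * a + 2 * dl ^+ 2 * t ^+ 2 * H ->
  al' * (t ^+ 2 + Nz) <= 2 * al' * a + al' * (1 + 2 * dl ^+ 2 * H) * t ^+ 2.
Proof.
move=> al'0 hN; have : al' * Nz <= al' * (2 * a + 2 * dl ^+ 2 * t ^+ 2 * H).
  exact: ler_wpM2l.
lra.
Qed.

Lemma step_decay (al s CK CG dl a Psi Kv Gv t : R) :
  s < 0 -> 0 <= CK -> 0 <= CG -> 0 < dl -> 0 <= a ->
  dl * ((CG + CK) / 2 + (s ^+ 2 * CK + CG) / - s) <= al / 2 ->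
  Psi <= - (al * a) -> Kv ^+ 2 <= CK * a -> Gv ^+ 2 <= CG * a ->
  Psi + dl * (dl * s * t + Gv) * Kv + dl * t * (dl * (dl * s * t + Gv))
    <= - (al / 2 * a) + s * dl ^+ 3 * t ^+ 2 / 2.
Proof.
move=> s0 CK0 CG0 dl0 a0 hdl hPsi hK hG.
have ns0 : 0 < - s by rewrite oppr_gt0.
set W := s * Kv + Gv.
have -> : Psi + dl * (dl * s * t + Gv) * Kv + dl * t * (dl * (dl * s * t + Gv)) =
    Psi + dl * (Gv * Kv) + dl * ((dl * t) * W) + s * dl ^+ 3 * t ^+ 2.
  by rewrite /W; ring.
have hWsq : W ^+ 2 + (s * Kv - Gv) ^+ 2 = 2 * (s ^+ 2 * Kv ^+ 2) + 2 * Gv ^+ 2.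
  by rewrite /W; ring.
clearbody W.
have hGK : Gv * Kv <= (CG + CK) / 2 * a.
  by have := mul_le_young Gv Kv ltr01; rewrite mul1r divr1; lra.
have hW : W ^+ 2 / - s <= 2 * ((s ^+ 2 * CK + CG) / - s) * a.
  have hsK : s ^+ 2 * Kv ^+ 2 <= s ^+ 2 * (CK * a) by apply: ler_wpM2l; rewrite ?sqr_ge0.
  have : W ^+ 2 <= 2 * (s ^+ 2 * CK + CG) * a.
    have : 2 * (s ^+ 2 * CK + CG) * a = 2 * (s ^+ 2 * (CK * a)) + 2 * (CG * a) by ring.
    by have := sqr_ge0 (s * Kv - Gv); lra.
  have -> : 2 * ((s ^+ 2 * CK + CG) / - s) * a = 2 * (s ^+ 2 * CK + CG) * a / - s.
    by ring.
  by move=> hW2; apply: ler_wpM2r; rewrite // invr_ge0 ltW.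
have hdW : dl * t * W <= (- s * (dl * t) ^+ 2 + 2 * ((s ^+ 2 * CK + CG) / - s) * a) / 2.
  apply: le_trans (mul_le_young _ _ ns0) _; lra.
have hE : dl * ((CG + CK) / 2 * a) + dl * ((s ^+ 2 * CK + CG) / - s * a) <= al / 2 * a.
  have -> : dl * ((CG + CK) / 2 * a) + dl * ((s ^+ 2 * CK + CG) / - s * a) =
      dl * ((CG + CK) / 2 + (s ^+ 2 * CK + CG) / - s) * a by ring.
  exact: ler_wpM2r.
have : dl * (Gv * Kv) <= dl * ((CG + CK) / 2 * a) by apply: ler_wpM2l; rewrite // ltW.
have : dl * (dl * t * W) <= dl * ((- s * (dl * t) ^+ 2 + 2 * ((s ^+ 2 * CK + CG) / - s) * a) / 2).
  by apply: ler_wpM2l; rewrite // ltW.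
have -> : dl * ((- s * (dl * t) ^+ 2 + 2 * ((s ^+ 2 * CK + CG) / - s) * a) / 2) =
    - (s * dl ^+ 3 * t ^+ 2 / 2) + dl * ((s ^+ 2 * CK + CG) / - s * a).
  by field; apply: ltr0_neq0.
lra.
Qed.

(* In [lyapunov_cert_setU1], [t] is the new coordinate [z j], [Nz] the old
   squared norm of [z], and [a], [P], [Psi], [Kv], [Gv] are the squared norm,
   the Lyapunov form, the old decay term and two linear forms, all evaluated
   at the sheared vector. *)
Lemma step_constants (al s CK CG H : R) :
  0 < al -> s < 0 -> 0 <= CK -> 0 <= CG -> 0 <= H ->
  exists dl al' : R, 0 < dl /\ 0 < al' /\ forall a P Psi Kv Gv t Nz : R,
    0 <= a -> al * a <= P -> Psi <= - (al * a) ->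
    Kv ^+ 2 <= CK * a -> Gv ^+ 2 <= CG * a ->
    Nz <= 2 * a + 2 * dl ^+ 2 * t ^+ 2 * H ->
    al' * (t ^+ 2 + Nz) <= P + (dl * t) ^+ 2 /\
    Psi + dl * (dl * s * t + Gv) * Kv + dl * t * (dl * (dl * s * t + Gv))
      <= - (al' * (t ^+ 2 + Nz)).
Proof.
move=> al0 s0 CK0 CG0 H0; have ns0 : 0 < - s by rewrite oppr_gt0.
pose E := (CG + CK) / 2 + (s ^+ 2 * CK + CG) / - s.
have E0 : 0 <= E.
  have := divr_ge0 (addr_ge0 (mulr_ge0 (sqr_ge0 s) CK0) CG0) (ltW ns0).
  rewrite /E; lra.
pose dl := al / (2 * E + 2).
have dl0 : 0 < dl by rewrite divr_gt0 //; lra.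
have dlE : dl * E <= al / 2.
  have : dl * (2 * E + 2) = al by rewrite /dl mulfVK // gt_eqF //; lra.
  lra.
pose mu := Num.min (dl ^+ 2) (- s * dl ^+ 3 / 2).
pose D := 1 + 2 * dl ^+ 2 * H.
have D0 : 0 < D by have := mulr_ge0 (sqr_ge0 dl) H0; rewrite /D; lra.
have mu0 : 0 < mu.
  have := mulr_gt0 ns0 (exprn_gt0 3 dl0).
  by rewrite lt_min exprn_gt0 //=; lra.
pose al' := Num.min (al / 4) (mu / D).
have al'0 : 0 < al' by rewrite lt_min divr_gt0 //= divr_gt0.
have al'D : al' * D <= mu by rewrite -ler_pdivlMr // ge_min lexx orbT.
exists dl, al'; do 2!split => //; move=> a P Psi Kv Gv t Nz a0 hP hPsi hK hG hN.
have hQ := step_norm_bound (ltW al'0) hN.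
have hdecay := step_decay t s0 CK0 CG0 dl0 a0 dlE hPsi hK hG.
have al'a : al' * a <= al / 4 * a by apply: ler_wpM2r; rewrite // ge_min lexx.
have hmu : al' * D * t ^+ 2 <= mu * t ^+ 2 by apply: ler_wpM2r; rewrite ?sqr_ge0.
have mu1 : mu * t ^+ 2 <= dl ^+ 2 * t ^+ 2.
  by apply: ler_wpM2r; rewrite ?sqr_ge0 // ge_min lexx.
have mu2 : mu * t ^+ 2 <= - s * dl ^+ 3 / 2 * t ^+ 2.
  by apply: ler_wpM2r; rewrite ?sqr_ge0 // ge_min lexx orbT.
have e1 : (dl * t) ^+ 2 = dl ^+ 2 * t ^+ 2 by ring.
have e2 : s * dl ^+ 3 * t ^+ 2 / 2 = - (- s * dl ^+ 3 / 2 * t ^+ 2) by ring.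
rewrite -/D in hQ; rewrite e1; rewrite e2 in hdecay.
clearbody E dl mu D al'.
have ala0 : 0 <= al * a by rewrite mulr_ge0 // ltW.
split; lra.
Qed.

End StepArithmetic.

Section LyapunovCertificate.
Variables (R : rcfType) (m : nat) (B : 'M[R]_m).
Implicit Types (S : {set 'I_m}) (c d y z : 'I_m -> R).

Definition scaled_apply S d y : 'I_m -> R := fun i => \sum_(l in S) B i l * d l * y l.

(* Some [d > 0] on [S] and rate [al > 0] make [y |-> bform_on S r L y y] a
   quadratic Lyapunov function of [B diag(d)] restricted to the coordinates in [S]. *)
Definition lyapunov_cert S : Prop :=
  exists d r L (al : R), [/\ 0 < al, {in S, forall l, 0 < d l},
    forall y, al * sqnorm_on S y <= bform_on S r L y y
    & forall y, bform_on S r L y (scaled_apply S d y) <= - (al * sqnorm_on S y)].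

Lemma lyapunov_cert0 : lyapunov_cert set0.
Proof.
exists (fun=> 1), 0%N, (fun _ _ => 0), 1; split=> // y.
  by rewrite /sqnorm_on /bform_on big_set0 big_ord0 mulr0.
by rewrite /sqnorm_on /bform_on big_set0 big_ord0 mulr0 oppr0.
Qed.

Lemma scaled_apply_setU1 S j d (dl : R) z i : j \notin S ->
  scaled_apply (j |: S) (fun l => if l == j then dl else d l) z i =
  B i j * dl * z j + scaled_apply S d z i.
Proof.
move=> jS; rewrite /scaled_apply big_setU1 //= eqxx; congr (_ + _).
by apply: eq_bigr => l lS; case: eqP lS jS => // -> ->.
Qed.

Lemma scaled_apply_shear S j d c (dl : R) z i : {in S, forall l, 0 < d l} ->
  scaled_apply S d (shear j dl (fun l => c l / d l) z) i =
  scaled_apply S d z i + dl * z j * \sum_(l in S) B i l * c l.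
Proof.
move=> dpos; rewrite /scaled_apply mulr_sumr -big_split; apply: eq_bigr => l lS /=.
by rewrite /shear; field; rewrite gt_eqF ?dpos.
Qed.

Lemma lyapunov_cert_setU1 S j c :
  j \notin S -> {in S, forall i, \sum_(l in S) B i l * c l = B i j} ->
  B j j - \sum_(l in S) B j l * c l < 0 -> lyapunov_cert S -> lyapunov_cert (j |: S).
Proof.
move=> jS hc hs [d [r [L [al [al0 dpos hcoer hdecay]]]]].
set s := B j j - _ in hs.
pose h l := c l / d l.
pose kap i := \sum_(k < r) L k i * dot_on S (L k) h.
pose g l := B j l * d l.
(* [h] solves [B_S diag(d) h = B_Sj], so shearing by [dl * z j * h] absorbs the
   new column of [B diag(d')]; [s] then drives the new coordinate. *)
have [CK CK0 hCK] := dot_on_sqr_bounded S kap.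
have [CG CG0 hCG] := dot_on_sqr_bounded S g.
have [dl [al' [dl0 [al'0 hstep]]]] :=
  step_constants al0 hs CK0 CG0 (sqnorm_on_ge0 S h).
have hstep_at z := hstep _ _ _ _ _ (z j) _ (sqnorm_on_ge0 S (shear j dl h z))
  (hcoer _) (hdecay _) (hCK _) (hCG _) (sqnorm_on_shear S j dl h z).
pose d' l := if l == j then dl else d l.
exists d', r.+1, (extend_forms S j r L dl h), al'; split=> // [l|z|z].
- by rewrite in_setU1 /d'; case: eqP => [_ _|_ /dpos].
- by rewrite sqnorm_on_setU1 // bform_on_extend // -expr2; exact: (hstep_at z).1.
rewrite sqnorm_on_setU1 // bform_on_extend //.
set y' := shear j dl h z; set t' := scaled_apply (j |: S) d' z j.
have ht' : t' = dl * s * z j + dot_on S g y'.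
  have -> : dot_on S g y' = scaled_apply S d y' j by [].
  rewrite /t' scaled_apply_setU1 // /y' scaled_apply_shear //.
  by rewrite /s; ring.
have hsh : {in S, shear j dl h (scaled_apply (j |: S) d' z) =1
                 (fun i => scaled_apply S d y' i + dl * t' * h i)}.
  move=> i iS; rewrite /shear /y' scaled_apply_shear // hc // scaled_apply_setU1 //.
  by rewrite /t'; ring.
rewrite (eq_bform_on r L y' hsh) bform_onDr bform_onZr [bform_on _ _ _ _ h]bform_on_dotr -/kap ht'.
exact: (hstep_at z).2.
Qed.

End LyapunovCertificate.
Lemma det_schur_ul (F : fieldType) k (a : F) (v : 'rV_k) (u : 'cV_k) (M : 'M_k) :
  M \in unitmx ->
  \det (block_mx a%:M v u M) = (a - (v *m invmx M *m u) 0 0) * \det M.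
Proof.
move=> Mu; pose s := a - (v *m invmx M *m u) 0 0.
have -> : block_mx a%:M v u M =
    block_mx 1 (v *m invmx M) 0 1 *m block_mx s%:M 0 u M.
  rewrite mulmx_block !mul0mx !mul1mx ?mulmx0 !add0r ?addr0 mulmxKV //.
  congr block_mx; apply/matrixP => i i'; rewrite !ord1 !mxE /s eqxx.
  by rewrite /= !mulr1n [(v *m _ *m u) 0 0]mxE subrK.
by rewrite det_mulmx det_ublock det_lblock !det1 !mul1r det_scalar1.
Qed.

Section PrincipalSubmatrices.
Variables (R : rcfType) (m : nat) (B : 'M[R]_m).

Lemma det_psub_reindex (S : {set 'I_m}) k (f : 'I_k -> 'I_m) :
  #|S| = k -> injective f -> (forall i, f i \in S) ->
  \det (psub B S) = \det (\matrix_(a, b) B (f a) (f b)).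
Proof.
move=> cardS; subst k => finj fS.
pose sig i := enum_rank_in (fS i) (f i).
have sigE i : enum_val (sig i) = f i by rewrite /sig enum_rankK_in.
have siginj : injective sig by move=> i1 i2 e; apply: finj; rewrite -!sigE e.
pose p := perm siginj.
have -> : \matrix_(a, b) B (f a) (f b) = row_perm p (col_perm p (psub B S)).
  by apply/matrixP => a b; rewrite !mxE /= !permE -!sigE.
rewrite row_permE col_permE !det_mulmx !det_perm odd_permV.
by rewrite mulrCA -expr2 sqrr_sign mulr1.
Qed.

Lemma det_psub0 : \det (psub B set0) = 1.
Proof.
have f0 : 'I_0 -> 'I_m by case.
by rewrite (@det_psub_reindex set0 0 f0) ?cards0 ?det_mx00 //; case.
Qed.

Lemma det_psubT : \det (psub B setT) = \det B.
Proof.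
rewrite (@det_psub_reindex setT m id) ?cardsT ?card_ord // => [|i]; last exact: in_setT.
by congr (\det _); apply/matrixP => a b; rewrite mxE.
Qed.

Lemma det_psub_setU1 (S : {set 'I_m}) j : j \notin S ->
  \det (psub B (j |: S)) =
  \det (block_mx (B j j)%:M (\row_b B j (enum_val b)) (\col_a B (enum_val a) j)
                 (psub B S)).
Proof.
move=> jS; pose f (a : 'I_(1 + #|S|)) := if split a is inr b then enum_val b else j.
have fS a : f a \in j |: S.
  by rewrite /f in_setU1; case: split => b; rewrite ?eqxx ?enum_valP ?orbT.
have finj : injective f.
  move=> a1 a2; rewrite -(splitK a1) -(splitK a2) /f !unsplitK.
  case: (split a1) => b1; case: (split a2) => b2 //=.
  - by rewrite !ord1.
  - by move=> e; move: (enum_valP b2); rewrite -e (negbTE jS).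
  - by move=> e; move: (enum_valP b1); rewrite e (negbTE jS).
  - by move/enum_val_inj => ->.
rewrite (det_psub_reindex _ finj fS) ?cardsU1 ?jS //; congr (\det _).
apply/matrixP => a b; rewrite mxE -(splitK a) -(splitK b) /f !unsplitK.
case: (split a) => a1; case: (split b) => b1.
- by rewrite block_mxEul !ord1 !mxE eqxx.
- by rewrite block_mxEur !ord1 mxE.
- by rewrite block_mxEdl !ord1 mxE.
- by rewrite block_mxEdr mxE.
Qed.

Lemma psub_schur_complement (S : {set 'I_m}) j : j \notin S -> \det (psub B S) != 0 ->
  exists c : 'I_m -> R, {in S, forall i, \sum_(l in S) B i l * c l = B i j} /\
    \det (psub B (j |: S)) = (B j j - \sum_(l in S) B j l * c l) * \det (psub B S).
Proof.
move=> jS dS; have Mu : psub B S \in unitmx by rewrite unitmxE unitfE.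
pose x := invmx (psub B S) *m \col_a B (enum_val a) j.
pose c l := \sum_(b | enum_val b == l) x b 0.
have sum_c i : \sum_(l in S) B i l * c l = \sum_b B i (enum_val b) * x b 0.
  rewrite big_enum_val; apply: eq_bigr => b _; congr (_ * _).
  rewrite /c (eq_bigl (pred1 b)) ?big_pred1_eq // => b'.
  by rewrite /= (inj_eq enum_val_inj).
exists c; split.
  move=> i iS; rewrite sum_c.
  have -> : i = enum_val (enum_rank_in iS i) by rewrite enum_rankK_in.
  set a := enum_rank_in iS i.
  have := congr1 (fun N : 'cV_#|S| => N a 0) (mulKVmx Mu (\col_a B (enum_val a) j)).
  by rewrite !mxE => <-; apply: eq_bigr => b _; rewrite [psub _ _ _ _]mxE.
by rewrite det_psub_setU1 // det_schur_ul // -mulmxA mxE sum_c; under eq_bigr do rewrite mxE.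
Qed.

End PrincipalSubmatrices.

Section FisherFuller.
Variables (R : rcfType) (m : nat) (B : 'M[R]_m).

Lemma lyapunov_cert_grow (S : {set 'I_m}) j :
  j \notin S -> \det (psub B S) != 0 ->
  \det (psub B (j |: S)) * \det (psub B S) < 0 ->
  lyapunov_cert B S -> lyapunov_cert B (j |: S).
Proof.
move=> jS dS dSj; have [c [hc eSj]] := psub_schur_complement jS dS.
apply: lyapunov_cert_setU1 hc _ => //.
by move: dSj; rewrite eSj -mulrA -expr2 pmulr_llt0 // exprn_even_gt0.
Qed.

Lemma setU1_of_subset (T T' : {set 'I_m}) :
  T \subset T' -> #|T'| = #|T|.+1 -> exists2 j, j \notin T & T' = j |: T.
Proof.
move=> sTT' cardT'; have /cards1P [j Ej] : #|T' :\: T| == 1%N.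
  by rewrite cardsDS // cardT' subSnn.
have : j \in T' :\: T by rewrite Ej set11.
rewrite in_setD => /andP [jT _]; exists j => //.
by rewrite -Ej setUC setDE setUIr setUCr setIT; apply/esym/setUidPr.
Qed.

Lemma PFFminus_chain : PFFminus B ->
  exists T : nat -> {set 'I_m}, [/\ T 0 = set0, T m = setT,
    forall k, (k < m)%N -> exists2 j, j \notin T k & T k.+1 = j |: T k
    & forall k, (k <= m)%N ->
        \det (psub B (T k)) != 0 /\ Num.sg (\det (psub B (T k))) = (-1) ^+ k].
Proof.
move=> [P0 [kap [hkap hsub]]].
pose T k := if k is 0 then set0 else kap k.
have Tcard k : (k <= m)%N -> #|T k| = k.
  by case: k => [|k] hk; [rewrite cards0 | have [] := hkap k.+1 hk].
exists T; split => //.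
- by apply/eqP; rewrite eqEcard subsetT cardsT card_ord Tcard ?leqnn.
- move=> k hk; apply: setU1_of_subset; last by rewrite !Tcard // ltnW.
  by case: k hk => [|k] hk; [rewrite sub0set | exact: (hsub k.+2)].
case=> [|k] hk; first by rewrite /= det_psub0 oner_eq0 sgr1.
have [_ nz] := hkap k.+1 hk; split => //.
by rewrite P0 // Tcard.
Qed.

Lemma PFFminus_lyapunov_cert : PFFminus B -> lyapunov_cert B setT.
Proof.
move=> /PFFminus_chain [T [T0 <- Tstep Tdet]].
suff: forall k, (k <= m)%N -> lyapunov_cert B (T k) by apply.
elim=> [|k IHk] hk; first by rewrite T0; exact: lyapunov_cert0.
have [j jT Tk1] := Tstep k hk.
have [dk sk] := Tdet k (ltnW hk); have [_ sk1] := Tdet k.+1 hk.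
rewrite Tk1 in sk1 *; apply: lyapunov_cert_grow jT dk _ (IHk (ltnW hk)).
by rewrite -sgr_lt0 sgrM sk1 sk exprS -mulrA -expr2 sqrr_sign mulr1 ltrN10.
Qed.

Lemma PFFminus_det_neq0 : PFFminus B -> \det B != 0.
Proof.
by move=> /PFFminus_chain [T [_ Tm _ Tdet]]; have [] := Tdet m (leqnn m); rewrite Tm det_psubT.
Qed.

End FisherFuller.

Lemma char_poly_trmx (F : fieldType) n (A : 'M[F]_n) : char_poly A^T = char_poly A.
Proof.
rewrite /char_poly -det_tr; congr (\det _).
by apply/matrixP => a b; rewrite !mxE eq_sym.
Qed.

Lemma eigenseqP (R : rcfType) m (M : 'M[R[i]]_m) z :
  (z \in eigseq M) = eigenvalue M z.
Proof.
rewrite eigenvalue_root_char /eigseq; case: closed_field_poly_normal => s /= ->.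
by rewrite rootZ ?root_prod_XsubC // (monicP (char_poly_monic M)) oner_eq0.
Qed.

Section Stability.
Variables (R : rcfType) (m : nat).
Local Notation T := [set: 'I_m].

Lemma eigenvalue_cmx_real_parts (N : 'M[R]_m) z : eigenvalue (cmx N) z ->
  exists y w : 'I_m -> R, [/\ 0 < sqnorm_on T y + sqnorm_on T w,
    forall i, \sum_l N i l * y l = complex.Re z * y i + - complex.Im z * w i
    & forall i, \sum_l N i l * w l = complex.Im z * y i + complex.Re z * w i].
Proof.
(* [eigenvalueP] yields a row eigenvector; transposing gives a column one. *)
case: z => c e; rewrite eigenvalue_root_char -char_poly_trmx -eigenvalue_root_char.
move=> /eigenvalueP [v vE v_neq0].
have Nv i : \sum_l (N i l)%:C%C * v 0 l = (c +i* e)%C * v 0 i.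
  have := congr1 (fun M : 'rV_m => M 0 i) vE; rewrite !mxE => <-.
  by apply: eq_bigr => l _; rewrite !mxE mulrC.
exists (fun l => complex.Re (v 0 l)), (fun l => complex.Im (v 0 l)); split => [|i|i].
- have [l vl] : exists l, v 0 l != 0.
    apply/existsP; apply: contraR v_neq0; rewrite negb_exists => /forallP v0.
    by apply/eqP/rowP => l; rewrite mxE; apply/eqP; rewrite -[_ == _]negbK v0.
  rewrite /sqnorm_on -big_split (bigD1 l) ?in_setT //=.
  have : 0 <= \sum_(i in T | i != l) (complex.Re (v 0 i) ^+ 2 + complex.Im (v 0 i) ^+ 2).
    by apply: sumr_ge0 => i _; rewrite addr_ge0 ?sqr_ge0.
  suff : 0 < complex.Re (v 0 l) ^+ 2 + complex.Im (v 0 l) ^+ 2 by lra.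
  move: vl; case: (v 0 l) => a b; rewrite eq_complex negb_and /=.
  by case/orP => ?; [apply: ltr_pwDl | apply: ltr_wpDl]; rewrite ?sqr_ge0 ?exprn_even_gt0.
- have := congr1 (@complex.Re R) (Nv i); rewrite raddf_sum; case: (v 0 i) => a b /= E.
  rewrite (eq_bigr (fun l => complex.Re ((N i l)%:C%C * v 0 l))) ?E /=; first ring.
  by move=> l _; case: (v 0 l) => a' b' /=; rewrite mul0r subr0.
have := congr1 (@complex.Im R) (Nv i); rewrite raddf_sum; case: (v 0 i) => a b /= E.
rewrite (eq_bigr (fun l => complex.Im ((N i l)%:C%C * v 0 l))) ?E /=; first ring.
by move=> l _; case: (v 0 l) => a' b' /=; rewrite mul0r addr0.
Qed.

Lemma lyapunov_real_part_lt0 (B : 'M[R]_m) S d r L (al a b : R) y w : 0 < al ->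
  (forall y, al * sqnorm_on S y <= bform_on S r L y y) ->
  (forall y, bform_on S r L y (scaled_apply B S d y) <= - (al * sqnorm_on S y)) ->
  0 < sqnorm_on S y + sqnorm_on S w ->
  {in S, scaled_apply B S d y =1 (fun i => a * y i + - b * w i)} ->
  {in S, scaled_apply B S d w =1 (fun i => b * y i + a * w i)} -> a < 0.
Proof.
move=> al0 hcoer hdecay nz hy hw.
have hdy := hdecay y; rewrite (eq_bform_on r L y hy) bform_onDr !bform_onZr in hdy.
have hdw := hdecay w.
rewrite (eq_bform_on r L w hw) bform_onDr !bform_onZr [bform_on _ _ _ w y]bform_onC in hdw.
have := mulr_gt0 al0 nz; rewrite mulrDr => hpos.
have := hcoer y; have := hcoer w; rewrite ltNge => hcw hcy; apply/negP => a0.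
have : 0 <= a * (bform_on S r L y y + bform_on S r L w w) by rewrite mulr_ge0 //; lra.
lra.
Qed.

Lemma lyapunov_cert_stable (B : 'M[R]_m) : lyapunov_cert B T ->
  exists2 d : 'rV[R]_m, (forall i, 0 < d 0 i) & ~ hurwitz_unstable (B *m diag_mx d).
Proof.
move=> [d [r [L [al [al0 dpos hcoer hdecay]]]]].
exists (\row_i d i) => [i|[z [ez Rez]]]; first by rewrite mxE dpos ?in_setT.
have [y [w [nz hy hw]]] := eigenvalue_cmx_real_parts ez.
have scaledE x i :
    scaled_apply B T d x i = \sum_l (B *m diag_mx (\row_i d i)) i l * x l.
  rewrite /scaled_apply (eq_bigl xpredT) => [|l]; last by rewrite in_setT.
  by apply: eq_bigr => l _; rewrite mul_mx_diag !mxE.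
have := lyapunov_real_part_lt0 al0 hcoer hdecay nz
  (fun i _ => etrans (scaledE y i) (hy i)) (fun i _ => etrans (scaledE w i) (hw i)).
by rewrite ltNge (ltW Rez).
Qed.

Lemma inertia_unstableP (M : 'M[R]_m) :
  (0 < (inertia M).1.2)%N <-> hurwitz_unstable M.
Proof.
rewrite /inertia /= -has_count.
by split=> [/hasP [z]|[z [ez Rz]]]; [rewrite eigenseqP; exists z | apply/hasP; exists z; rewrite ?eigenseqP].
Qed.

End Stability.

Unset Implicit Arguments.

Theorem mainTheorem6 (R : rcfType) (n : nat) (A : 'M[R]_n) (kappa : {set 'I_n}) :
  PFFminus (psub A kappa) -> hurwitz_unstable (psub A kappa) -> DHopf A.
Proof.
move=> hFF unstable.
have [d dpos stable] := lyapunov_cert_stable (PFFminus_lyapunov_cert hFF).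
exists kappa; split; first exact: PFFminus_det_neq0.
exists d, (const_mx 1); split; first exact: dpos.
split=> [i|]; first by rewrite mxE ltr01.
rewrite diag_const_mx mulmx1 => same_inertia; apply: stable.
by apply/inertia_unstableP; rewrite same_inertia; apply/inertia_unstableP.
Qed.
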